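(* Let $H$ be a complex separable Hilbert space and let $S,T,X\in B(H)$ with $S$ and $T$ positive. Then $$\|SX-XT\|_2\le\|X\|_2\left(\|S\|_2^2+\|T\|_2^2\right)^{1/2}.$$
   Context: $\|\cdot\|_2$ denotes the Hilbert–Schmidt norm $\|Z\|_2=(\operatorname{tr}(Z^*Z))^{1/2}$ (possibly $+\infty$). *)

From HB Require Import structures.
From mathcomp Require Import all_boot all_order all_algebra.
From mathcomp Require Import all_classical all_reals all_analysis.
From mathcomp Require Import complex.
Set Implicit Arguments. Unset Strict Implicit. Unset Printing Implicit Defensive.
Import Order.TTheory GRing.Theory Num.Theory.
Local Open Scope ring_scope.
Local Open Scope classical_set_scope.

(* The separable complex Hilbert space H is realised (up to unitary
   isomorphism) as l^2(I) for a countable index set I, with its standard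
   orthonormal basis (e_j)_{j in I}.  Vectors are functions I -> R[i];
   only the square-summable ones are elements of H. *)
Section HS.
Variables (R : realType) (I : countType).
Local Notation C := (R[i]).

Definition cnorm2 (z : C) : R := complex.Re z ^+ 2 + complex.Im z ^+ 2.

Definition sqnorm (x : I -> C) : \bar R :=
  (\esum_(i in [set: I]) (cnorm2 (x i))%:E)%E.

Definition l2 (x : I -> C) : Prop := (sqnorm x < +oo)%E.

Definition rsum (g : I -> R) : R :=
  fine (\esum_(i in [set: I]) (Num.max (g i) 0)%:E)%E
  - fine (\esum_(i in [set: I]) (Num.max (- g i) 0)%:E)%E.

Definition csum (f : I -> C) : C :=
  Complex (rsum (fun i => complex.Re (f i))) (rsum (fun i => complex.Im (f i))).

Definition inner (x y : I -> C) : C := csum (fun i => x i * (y i)^*).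

Definition basis (j : I) : I -> C := fun i => if i == j then 1 else 0.

(* operators are represented as maps on I -> C; only their action on l2 matters *)
Definition op := (I -> C) -> (I -> C).

Definition bounded_op (A : op) : Prop :=
  (forall (a : C) (x y : I -> C), l2 x -> l2 y ->
     A (fun i => a * x i + y i) = (fun i => a * A x i + A y i)) /\
  exists M : R, forall x, l2 x -> l2 (A x) /\ (sqnorm (A x) <= (M ^+ 2)%:E * sqnorm x)%E.

(* positive operator: <A x, x> >= 0 (in particular real) for all x in H *)
Definition positive_op (A : op) : Prop :=
  bounded_op A /\ forall x, l2 x -> 0 <= inner (A x) x.

Definition op_comp (A B : op) : op := fun x => A (B x).
Definition op_sub (A B : op) : op := fun x i => A x i - B x i.

(* tr(Z^* Z) = sum_j ||Z e_j||^2, in [0, +oo] *)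
Definition hs_sq (Z : op) : \bar R := (\esum_(j in [set: I]) sqnorm (Z (basis j)))%E.

Definition hs_norm (Z : op) : \bar R := sqrte (hs_sq Z).

End HS.

From Pilot Require Import Defs.
From HB Require Import structures.
From mathcomp Require Import all_boot all_order all_algebra.
From mathcomp Require Import all_classical all_reals all_analysis.
From mathcomp Require Import complex.
From mathcomp Require Import spectral sesquilinear ring lra.
Import Order.TTheory GRing.Theory Num.Theory Num.Def.
(* re-imported so that [basis] denotes [Defs.basis], not the topological one *)
Import Defs numFieldNormedType.Exports.
Local Open Scope ring_scope.

(* Compress S, T and X to the span of the first n basis vectors.  The
   compressions of S and T are positive semidefinite matrices, unitarily
   diagonalisable as diag(d) and diag(e) with d, e >= 0; in the matching bases
   the commutator has entries (d_i - e_j) Y_ij, where Y is X in those bases,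
   and |d_i - e_j|^2 <= d_i^2 + e_j^2 <= ||S||_2^2 + ||T||_2^2 gives the
   inequality for matrices.  As n grows, each entry of the compressed
   commutator converges to the corresponding entry of SX - XT, because S and
   X are bounded and X e_j, T e_j are square summable.  So every finite block
   of SX - XT obeys the bound, and so does its whole Hilbert-Schmidt sum. *)

Set Implicit Arguments. Unset Strict Implicit. Unset Printing Implicit Defensive.

Section PositiveMatrices.
Local Open Scope sesquilinear_scope.
Variable C : numClosedFieldType.

Local Notation "''[' u , v ]_ A" := (form_of_matrix conjC A u v)
  (at level 2, format "''[' u ,  v ]_ A").

Definition psdmx n (A : 'M[C]_n) := forall v : 'rV[C]_n, 0 <= '[v, v]_A.

Lemma form_of_matrixDZ n (A : 'M[C]_n) (u v : 'rV[C]_n) c :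
  '[u + c *: v, u + c *: v]_A =
    '[u, u]_A + c * c^* * '[v, v]_A + c * '[v, u]_A + c^* * '[u, v]_A.
Proof.
rewrite linearD /= !linearDl /= !linearZ /= !linearZl_LR /= -[c *: _]/(c * _); ring.
Qed.

Lemma psdmx_formC n (A : 'M[C]_n) : psdmx A ->
  forall u v : 'rV[C]_n, '[u, v]_A = ('[v, u]_A)^*.
Proof.
(* polarization: '[w, w]_A is real for w = u + v and for w = u + 'i v *)
move=> psdA u v.
have conj_form (w : 'rV[C]_n) : ('[w, w]_A)^* = '[w, w]_A by exact: geC0_conj.
have := conj_form (u + 'i *: v); have := conj_form (u + 1 *: v).
rewrite !form_of_matrixDZ !(rmorphD, rmorphM) /= !conjCK conjCi rmorph1 !conj_form.
set x := '[u, v]_A; set y := '[v, u]_A.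
move=> /eqP; rewrite -subr_eq0 => /eqP E1 /eqP; rewrite -subr_eq0 => /eqP E2.
have : 2 * 'i * (x^* - y) = 0.
  have := congr2 (fun p q => 'i * p + q) E1 E2; rewrite mulr0 addr0 => <-; ring.
move/eqP; rewrite !mulf_eq0 pnatr_eq0 (negPf (neq0Ci C)) /= subr_eq0.
by move=> /eqP <-; rewrite conjCK.
Qed.

Lemma psdmx_hermsym n (A : 'M[C]_n) : psdmx A -> A \is hermsymmx.
Proof.
move=> psdA; apply/is_hermitianmxP; rewrite expr0 scale1r.
by apply/matrixP => i j; rewrite !mxE -!(rV_formee A conjC) psdmx_formC.
Qed.

Lemma psdmx_spectral n (A : 'M[C]_n) : psdmx A ->
  exists P : 'M[C]_n, exists d : 'rV[C]_n,
    [/\ P \is unitarymx, A = P ^t* *m diag_mx d *m P & forall k, 0 <= d 0 k].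
Proof.
move=> psdA; set P := spectralmx A; set d := spectral_diag A.
have unitaryP : P \is unitarymx by exact: spectral_unitarymx.
have defA : A = P ^t* *m diag_mx d *m P.
  by rewrite -invmx_unitary //; apply/orthomx_spectralP/hermitian_normalmx/psdmx_hermsym.
exists P, d; split => // k.
have -> : d 0 k = (P *m A *m P ^t*) k k.
  by rewrite defA !mulmxA (unitarymxP unitaryP) mul1mx mulmxtVK // mxE eqxx mulr1n.
rewrite -(rV_formee _ conjC) /form_of_matrix !mulmxA -rowE -mulmxA -map_mxM -trmx_mul -rowE.
exact: psdA.
Qed.

Definition hsmx2 n (A : 'M[C]_n) := \tr (A *m A ^t*).

Lemma hsmx2E n (A : 'M[C]_n) : hsmx2 A = \sum_i \sum_j `|A i j| ^+ 2.
Proof.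
apply: eq_bigr => i _; rewrite mxE; apply: eq_bigr => j _.
by rewrite !mxE normCK.
Qed.

Lemma hsmx2_unitary n (P Q A : 'M[C]_n) : P \is unitarymx -> Q \is unitarymx ->
  hsmx2 (P *m A *m Q ^t*) = hsmx2 A.
Proof.
move=> unitaryP unitaryQ; rewrite /hsmx2 !trmx_mul !map_mxM trmxCK !mulmxA.
by rewrite (mulmxKtV _ unitaryQ) // -!mulmxA mxtrace_mulC !mulmxA (mulmxKtV _ unitaryP).
Qed.

Lemma hsmx2_diag n (d : 'rV[C]_n) : hsmx2 (diag_mx d) = \sum_i `|d 0 i| ^+ 2.
Proof.
rewrite hsmx2E; apply: eq_bigr => i _; rewrite (bigD1 i) //= big1 ?addr0.
  by rewrite mxE eqxx mulr1n.
by move=> j /negPf ji; rewrite mxE eq_sym ji mulr0n normr0 expr0n.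
Qed.

Lemma hsmx2_diag_commutator_le n (d e : 'rV[C]_n) (Y : 'M[C]_n) :
  (forall k, 0 <= d 0 k) -> (forall k, 0 <= e 0 k) ->
  hsmx2 (diag_mx d *m Y - Y *m diag_mx e)
    <= hsmx2 Y * (hsmx2 (diag_mx d) + hsmx2 (diag_mx e)).
Proof.
move=> d_ge0 e_ge0; rewrite !hsmx2_diag !hsmx2E mul_diag_mx mul_mx_diag mulr_suml.
apply: ler_sum => i _; rewrite mulr_suml; apply: ler_sum => j _.
rewrite !mxE [d 0 i * _]mulrC -mulrBr normrM exprMn ler_wpM2l ?exprn_ge0 //.
have le_sum (f : 'rV[C]_n) k : `|f 0 k| ^+ 2 <= \sum_l `|f 0 l| ^+ 2.
  by rewrite (bigD1 k) //= lerDl sumr_ge0.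
apply: le_trans (lerD (le_sum d i) (le_sum e j)).
rewrite (ger0_norm (d_ge0 i)) (ger0_norm (e_ge0 j)) real_normK ?rpredB ?ger0_real //.
by rewrite sqrrB addrAC lerBlDr lerDl mulrn_wge0 ?mulr_ge0.
Qed.

Theorem hsmx2_commutator_le n (S T X : 'M[C]_n) : psdmx S -> psdmx T ->
  hsmx2 (S *m X - X *m T) <= hsmx2 X * (hsmx2 S + hsmx2 T).
Proof.
move=> /psdmx_spectral[P [d [unitaryP defS d_ge0]]].
move=> /psdmx_spectral[Q [e [unitaryQ defT e_ge0]]].
have hsmx2_unitaryV (U V D : 'M[C]_n) : U \is unitarymx -> V \is unitarymx ->
    hsmx2 (U ^t* *m D *m V) = hsmx2 D.
  by move=> ? ?; rewrite -[V]trmxCK hsmx2_unitary ?trmxC_unitary.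
have PtP : P ^t* *m P = 1%:M.
  by rewrite -{2}[P]trmxCK; apply/unitarymxP; rewrite trmxC_unitary.
set Y := P *m X *m Q ^t*.
have -> : S *m X - X *m T =
    P ^t* *m (diag_mx d *m Y - Y *m diag_mx e) *m Q.
  by rewrite defS defT mulmxBr mulmxBl !mulmxA (mulmxKtV _ unitaryQ) // PtP mul1mx.
rewrite -(hsmx2_unitary X unitaryP unitaryQ) -/Y defS defT !hsmx2_unitaryV //.
exact: hsmx2_diag_commutator_le.
Qed.

End PositiveMatrices.

Section RealSeries.
Variable R : realType.
Local Open Scope classical_set_scope.

Lemma nneseries_fin (f : nat -> \bar R) n : (forall c, 0 <= f c)%E ->
  (forall c, (n <= c)%N -> f c = 0) -> (\sum_(c <oo) f c = \sum_(c < n) f c)%E.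
Proof.
move=> f_ge0 f_eq0; rewrite (nneseries_split 0 n) // add0n big_mkord.
by rewrite eseries0 ?adde0 // => c le_nc _; exact: f_eq0.
Qed.

Lemma nneseries_ub (F : nat -> \bar R) (B : \bar R) : (forall k, 0 <= F k)%E ->
  (forall K, \sum_(k < K) F k <= B)%E -> (\sum_(k <oo) F k <= B)%E.
Proof.
move=> F_ge0 le_FB; apply: lime_le; first exact: is_cvg_nneseries.
by apply: nearW => K; rewrite big_mkord.
Qed.

Lemma nneseries_ge_ord (F : nat -> \bar R) n : (forall k, 0 <= F k)%E ->
  (\sum_(k < n) F k <= \sum_(k <oo) F k)%E.
Proof. by move=> F_ge0; rewrite -(big_mkord xpredT); exact: nneseries_lim_ge. Qed.

Lemma ler_sum_ord_widen (F : nat -> R) K n : (K <= n)%N -> (forall i, 0 <= F i) ->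
  \sum_(i < K) F i <= \sum_(i < n) F i.
Proof.
move=> le_Kn F_ge0; rewrite -!(big_mkord xpredT).
exact: (nondecreasing_series (fun i _ _ => F_ge0 i)) le_Kn.
Qed.

Lemma ler_sum2_ord_widen (F : nat -> nat -> R) K1 K2 n1 n2 :
  (K1 <= n1)%N -> (K2 <= n2)%N -> (forall a b, 0 <= F a b) ->
  \sum_(a < K1) \sum_(b < K2) F a b <= \sum_(a < n1) \sum_(b < n2) F a b.
Proof.
move=> le_K1n1 le_K2n2 F_ge0.
apply: (@le_trans _ _ (\sum_(a < K1) \sum_(b < n2) F a b)).
  by apply: ler_sum => a _; apply: (ler_sum_ord_widen (F := F a)).
apply: (ler_sum_ord_widen (F := fun a => \sum_(b < n2) F a b)) => // a.
exact: sumr_ge0.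
Qed.

Lemma cvg0_sqr_le (r v : nat -> R) :
  (forall n, r n ^+ 2 <= v n) -> v @ \oo --> 0 -> r @ \oo --> 0.
Proof.
move=> le_rv v_cvg; apply/cvgr0Pnorm_lt => e e_gt0.
have v_small := (cvgr0Pnorm_lt _).1 v_cvg _ (exprn_gt0 2 e_gt0).
near=> n; have lt_v_e2 : `|v n| < e ^+ 2 by near: n; exact: v_small.
have := le_lt_trans (le_rv n) (le_lt_trans (ler_norm _) lt_v_e2).
by rewrite -real_normK ?num_real // => lt_r_e2; nra.
Unshelve. all: by end_near.
Qed.

End RealSeries.

Section ComplexSequences.
Variable R : realType.
Local Open Scope classical_set_scope.
Local Notation C := R[i].
Local Notation Re := complex.Re.
Local Notation Im := complex.Im.

Lemma cnorm2_ge0 (z : C) : 0 <= cnorm2 z.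
Proof. by rewrite addr_ge0 ?sqr_ge0. Qed.

Lemma cnorm20 : cnorm2 (0 : C) = 0.
Proof. by rewrite /cnorm2 expr0n addr0. Qed.

Lemma cnorm2N (z : C) : cnorm2 (- z) = cnorm2 z.
Proof. by rewrite /cnorm2 !raddfN /= !sqrrN. Qed.

Lemma cnorm2E (z : C) : ((cnorm2 z)%:C)%C = `|z| ^+ 2.
Proof. exact: add_Re2_Im2. Qed.

Lemma cnorm2E_ge0 (z : C) : (0 <= (cnorm2 z)%:E)%E.
Proof. by rewrite lee_fin cnorm2_ge0. Qed.

Lemma sqr_ReB_le (z w : C) : (Re z - Re w) ^+ 2 <= cnorm2 (z - w).
Proof. by rewrite /cnorm2 raddfB lerDl sqr_ge0. Qed.

Lemma sqr_ImB_le (z w : C) : (Im z - Im w) ^+ 2 <= cnorm2 (z - w).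
Proof. by rewrite /cnorm2 (raddfB (@complex.Im R)) lerDr sqr_ge0. Qed.

Definition cvg_ReIm (u : nat -> C) (z : C) :=
  (Re (u n) @[n --> \oo] --> Re z) /\ (Im (u n) @[n --> \oo] --> Im z).

Lemma cvg_ReIm_cst (z : C) : cvg_ReIm (fun=> z) z.
Proof. by split; exact: cvg_cst. Qed.

Lemma cvg_ReImB u v (z w : C) :
  cvg_ReIm u z -> cvg_ReIm v w -> cvg_ReIm (fun n => u n - v n) (z - w).
Proof.
move=> [uRe uIm] [vRe vIm]; rewrite /cvg_ReIm !raddfB /=; split.
  by under eq_fun do rewrite raddfB; exact: cvgB.
by under eq_fun do rewrite (raddfB (@complex.Im R)); exact: cvgB.
Qed.

Lemma cvg_ReIm_cnorm2 u (z : C) :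
  cvg_ReIm u z -> cnorm2 (u n) @[n --> \oo] --> cnorm2 z.
Proof.
by move=> [uRe uIm]; rewrite /cnorm2 !expr2; exact: cvgD (cvgM uRe uRe) (cvgM uIm uIm).
Qed.

Lemma cvg_ReIm_cnorm2_le u (z : C) (v : nat -> R) :
  (forall n, cnorm2 (u n - z) <= v n) -> v @ \oo --> 0 -> cvg_ReIm u z.
Proof.
move=> le_uv v_cvg; split; apply: cvg_zero; apply: (cvg0_sqr_le _ v_cvg) => n;
  rewrite !fctE; apply: le_trans (le_uv n); [exact: sqr_ReB_le | exact: sqr_ImB_le].
Qed.

End ComplexSequences.

Section SquareSummable.
Variables (R : realType) (I : countType).
Local Notation C := R[i].
Implicit Types (y : I -> C) (A : op R I).
Local Open Scope classical_set_scope.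

Lemma pickle_inv_Some c (i : I) : pickle_inv c = Some i -> pickle i = c.
Proof. by move=> E; have := @pickle_invK I c; rewrite E. Qed.

Lemma esum_pickle (f : I -> \bar R) : (forall i, 0 <= f i)%E ->
  (\esum_(i in [set: I]) f i = \sum_(c <oo) oapp f 0 (pickle_inv c))%E.
Proof.
move=> f_ge0; rewrite nneseries_esumT; last by move=> c; case: pickle_inv.
rewrite (esumID (range (@pickle I))); last by move=> c _; case: pickle_inv.
rewrite [X in (_ + X)%E]esum1 ?adde0; last first.
  move=> c [_ /= not_code]; case E: pickle_inv => [i|] //=.
  by case: not_code; exists i => //; exact: pickle_inv_Some.
rewrite setTI esum_image; last by move=> x y _ _; exact: (pcan_inj (@pickleK_inv I)).
by apply: eq_esum => i _; rewrite pickleK_inv.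
Qed.

Definition ncoord (V : zmodType) (y : I -> V) (c : nat) : V := oapp y 0 (pickle_inv c).

Lemma ncoord_pickle (V : zmodType) (y : I -> V) i : ncoord y (pickle i) = y i.
Proof. by rewrite /ncoord pickleK_inv. Qed.

Lemma ncoord_None (V : zmodType) (y : I -> V) c : @pickle_inv I c = None -> ncoord y c = 0.
Proof. by rewrite /ncoord => ->. Qed.

Definition support_below (V : zmodType) (y : I -> V) n :=
  forall i, (n <= pickle i)%N -> y i = 0.

Lemma ncoord_support_below (V : zmodType) (y : I -> V) n c :
  support_below y n -> (n <= c)%N -> ncoord y c = 0.
Proof.
move=> supp_y le_nc; rewrite /ncoord; case E: pickle_inv => [i|] //=.
by apply: supp_y; rewrite (pickle_inv_Some E).
Qed.

Lemma sqnorm_ge0 y : (0 <= sqnorm y)%E.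
Proof. by apply: esum_ge0 => i _; exact: cnorm2E_ge0. Qed.

Lemma sqnorm_ncoord y : sqnorm y = (\sum_(c <oo) (cnorm2 (ncoord y c))%:E)%E.
Proof.
rewrite /sqnorm esum_pickle => [|i]; last exact: cnorm2E_ge0.
by apply: eq_eseriesr => c _; rewrite /ncoord; case: pickle_inv => //=; rewrite cnorm20.
Qed.

Lemma cnorm2_le_sqnorm y i : ((cnorm2 (y i))%:E <= sqnorm y)%E.
Proof.
apply: esum_ge; exists [set i]%classic; last by rewrite fsbig_set1.
by split => //; exact: finite_set1.
Qed.

Lemma l2_support_below y n : support_below y n -> l2 y.
Proof.
move=> supp_y; rewrite /l2 sqnorm_ncoord (@nneseries_fin _ _ n).
- by rewrite sumEFin ltry.
- by move=> c; exact: cnorm2E_ge0.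
- by move=> c le_nc; rewrite (ncoord_support_below supp_y le_nc) cnorm20.
Qed.

Lemma l2_basis (j : I) : l2 (basis R j).
Proof.
apply: (@l2_support_below _ (pickle j).+1) => i; rewrite /basis.
by case: eqP => // ->; rewrite ltnn.
Qed.

Definition trunc_vec y m : I -> C := fun i => if (pickle i < m)%N then y i else 0.

Lemma l2_trunc_vec y m : l2 (trunc_vec y m).
Proof. by apply: (@l2_support_below _ m) => i; rewrite /trunc_vec ltnNge => ->. Qed.

Lemma sqnorm_trunc_vec_sub y m :
  sqnorm (fun i => trunc_vec y m i - y i) = (\sum_(m <= c <oo) (cnorm2 (ncoord y c))%:E)%E.
Proof.
rewrite sqnorm_ncoord (nneseries_split 0 m) => [|c _]; last exact: cnorm2E_ge0.
rewrite add0n big_nat big1 ?add0e => [|c /andP[_ lt_cm]]; last first.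
  rewrite /ncoord; case E: pickle_inv => [i|] /=; last by rewrite cnorm20.
  by rewrite /trunc_vec (pickle_inv_Some E) lt_cm subrr cnorm20.
apply/congr_lim/funext => n; apply: eq_big_nat => c /andP[le_mc _].
rewrite /ncoord; case E: pickle_inv => [i|] //=.
by rewrite /trunc_vec (pickle_inv_Some E) ltnNge le_mc sub0r cnorm2N.
Qed.

Lemma bounded_opB A x y : bounded_op A -> l2 x -> l2 y ->
  A (fun i => x i - y i) = (fun i => A x i - A y i).
Proof.
move=> [linA _] l2x l2y.
have -> : (fun i => x i - y i) = (fun i => -1 * y i + x i).
  by apply/funext => i; rewrite mulN1r addrC.
by rewrite linA //; apply/funext => i; rewrite mulN1r addrC.
Qed.

Lemma bounded_op_l2 A x : bounded_op A -> l2 x -> l2 (A x).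
Proof. by move=> [_ [M bdM]] /bdM[]. Qed.

Lemma bounded_op0 A : bounded_op A -> A (fun=> 0) = (fun=> 0).
Proof.
move=> bdA; have l20 : l2 (fun _ : I => 0 : C) by apply: (@l2_support_below _ 0) => i.
apply/funext => i; have := congr1 (fun f => f i) (bounded_opB bdA l20 l20).
by rewrite /= subr0 subrr.
Qed.

Lemma apply_trunc_vec A y m i : bounded_op A ->
  A (trunc_vec y m) i = \sum_(c < m) ncoord (fun k => A (basis R k) i) c * ncoord y c.
Proof.
move=> bdA; elim: m i => [|m IH] i.
  by rewrite big_ord0 (_ : trunc_vec y 0 = fun=> 0) ?(bounded_op0 bdA) //; apply/funext.
rewrite big_ord_recr /= -IH /ncoord.
case E: (pickle_inv m) => [k|] /=; last first.
  rewrite mul0r addr0; congr (A _ i); apply/funext => j; rewrite /trunc_vec ltnS leq_eqVlt.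
  by case: eqP => //= pj; move: E; rewrite -pj pickleK_inv.
have pk := pickle_inv_Some E.
have -> : trunc_vec y m.+1 = (fun j => y k * basis R k j + trunc_vec y m j).
  apply/funext => j; rewrite /trunc_vec /basis ltnS leq_eqVlt.
  case: (eqVneq j k) => [->|nkj]; first by rewrite pk eqxx ltnn mulr1 addr0.
  rewrite mulr0 add0r -pk; case: eqP => //= /(pcan_inj (@pickleK_inv I)) jk.
  by rewrite jk eqxx in nkj.
by case: bdA => linA _; rewrite (linA _ _ _ (l2_basis k) (l2_trunc_vec y m)) mulrC addrC.
Qed.

Lemma trunc_vec_cvg_ReIm A y i : bounded_op A -> l2 y ->
  cvg_ReIm (fun m => A (trunc_vec y m) i) (A y i).
Proof.
move=> bdA l2y; have [_ [M bdM]] := bdA.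
pose tail m i := trunc_vec y m i - y i.
have l2_tail m : l2 (tail m).
  apply: le_lt_trans l2y; apply: le_esum => j _; rewrite lee_fin /tail /trunc_vec.
  by case: ifP => _; rewrite ?subrr ?sub0r ?cnorm2N ?cnorm20 ?cnorm2_ge0.
have fin_tail m : sqnorm (tail m) \is a fin_num.
  by rewrite ge0_fin_numE ?sqnorm_ge0 //; exact: l2_tail.
have /fine_cvgP[_ tail_cvg] : (sqnorm (tail m) @[m --> \oo] --> 0%E).
  rewrite /tail; under eq_fun do rewrite sqnorm_trunc_vec_sub.
  apply: nneseries_tail_cvg => [|c _]; last exact: cnorm2E_ge0.
  by move: l2y; rewrite /l2 sqnorm_ncoord.
apply: (cvg_ReIm_cnorm2_le (v := fun m => M ^+ 2 * fine (sqnorm (tail m)))).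
  move=> m; rewrite -lee_fin EFinM fineK //.
  have -> : A (trunc_vec y m) i - A y i = A (tail m) i.
    by rewrite /tail (bounded_opB bdA (l2_trunc_vec y m) l2y).
  exact: le_trans (cnorm2_le_sqnorm _ i) (bdM _ (l2_tail m)).2.
by rewrite -(mulr0 (M ^+ 2)); exact: cvgMr tail_cvg.
Qed.

Lemma rsum_support_below (g : I -> R) n : support_below g n ->
  rsum g = \sum_(c < n) ncoord g c.
Proof.
move=> supp_g.
have esum_fin (F : R -> R) : F 0 = 0 -> (forall x, 0 <= F x) ->
    (\esum_(i in [set: I]) (F (g i))%:E = (\sum_(c < n) F (ncoord g c))%:E)%E.
  move=> F0 F_ge0; rewrite esum_pickle => [|i]; last by rewrite lee_fin.
  rewrite (@nneseries_fin _ _ n) => [|c|c le_nc].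
  - rewrite -sumEFin; apply: eq_bigr => c _.
    by rewrite /ncoord; case: pickle_inv => /= [i|]; rewrite ?F0.
  - by case: pickle_inv => //= i; rewrite lee_fin.
  - case E: pickle_inv => [i|] //=.
    by rewrite supp_g ?F0 // (pickle_inv_Some E).
have max0_ge0 (x : R) : 0 <= Num.max x 0 by rewrite le_max lexx orbT.
rewrite /rsum (esum_fin (fun x => Num.max x 0)) ?maxxx //.
rewrite (esum_fin (fun x => Num.max (- x) 0)) ?oppr0 ?maxxx //= -sumrB.
apply: eq_bigr => c _; set x := ncoord g c.
by case: (lerP x 0) => ?; case: (lerP (- x) 0) => ?; lra.
Qed.

Lemma csum_support_below (f : I -> C) n :
  support_below f n -> csum f = \sum_(c < n) ncoord f c.
Proof.
move=> supp_f; rewrite /csum !(@rsum_support_below _ n) => [|i /supp_f ->|i /supp_f ->] //.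
apply/eqP; rewrite eq_complex !raddf_sum /=.
by apply/andP; split; apply/eqP; apply: eq_bigr => c _; rewrite /ncoord; case: pickle_inv.
Qed.

(* the matrix coefficient <A e_k, e_i> of A, for a = pickle i and b = pickle k *)
Definition entry A (a b : nat) : C :=
  ncoord (fun i => ncoord (fun k => A (basis R k) i) b) a.

Lemma entry_pickler A a k : entry A a (pickle k) = ncoord (A (basis R k)) a.
Proof. by rewrite /entry; congr ncoord; apply/funext => i; rewrite ncoord_pickle. Qed.

Lemma entry_Nonel A a b : @pickle_inv I a = None -> entry A a b = 0.
Proof. exact: ncoord_None. Qed.

Lemma entry_Noner A a b : @pickle_inv I b = None -> entry A a b = 0.
Proof. by move=> b_None; rewrite /entry /ncoord b_None; case: pickle_inv. Qed.

Lemma entry_sub A B a b : entry (op_sub A B) a b = entry A a b - entry B a b.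
Proof.
by rewrite /entry /ncoord; case: pickle_inv => [i|] /=; case: pickle_inv => [k|] //=;
  rewrite subr0.
Qed.

Lemma ncoord_apply_trunc_vec A y m a : bounded_op A ->
  ncoord (A (trunc_vec y m)) a = \sum_(c < m) entry A a c * ncoord y c.
Proof.
move=> bdA; case E: (pickle_inv a) => [i|]; last first.
  by rewrite (ncoord_None _ E) big1 // => c _; rewrite (entry_Nonel _ _ E) mul0r.
rewrite -(pickle_inv_Some E) ncoord_pickle apply_trunc_vec //.
by apply: eq_bigr => c _; rewrite /entry ncoord_pickle.
Qed.

Definition compression A n : 'M[C]_n := \matrix_(a < n, b < n) entry A a b.

Lemma psdmx_compression S n : positive_op S -> psdmx (compression S n).
Proof.
move=> [bdS S_ge0] v.
pose y (i : I) : C := if insub (pickle i) is Some a then (v 0 a)^* else 0.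
have supp_y : support_below y n by move=> i le_ni; rewrite /y insubF // ltnNge le_ni.
have trunc_vec_y : trunc_vec y n = y.
  by apply/funext => i; rewrite /trunc_vec; case: ltnP => // /supp_y ->.
have entry_v (a c : 'I_n) : v 0 a * entry S a c * (v 0 c)^* =
    (ncoord y a)^* * entry S a c * ncoord y c.
  case Ea: (pickle_inv a) => [i|]; last by rewrite (entry_Nonel _ _ Ea) !(mulr0, mul0r).
  case Ec: (pickle_inv c) => [k|]; last by rewrite (entry_Noner _ _ Ec) !(mulr0, mul0r).
  rewrite -(pickle_inv_Some Ea) -(pickle_inv_Some Ec) !ncoord_pickle /y.
  by rewrite (pickle_inv_Some Ea) (pickle_inv_Some Ec) !valK conjCK.
have := S_ge0 y (l2_support_below supp_y).
rewrite /inner (@csum_support_below _ n) => [|i /supp_y ->]; last by rewrite conjC0 mulr0.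
suff -> : form_of_matrix conjC (compression S n) v v =
    \sum_(a < n) ncoord (fun i => S y i * (y i)^*) a by [].
rewrite /form_of_matrix trace_mx11 !mxE.
under eq_bigr do rewrite !mxE mulr_suml.
rewrite exchange_big /=; apply: eq_bigr => a _.
have -> : ncoord (fun i => S y i * (y i)^*) a = ncoord (S y) a * (ncoord y a)^*.
  by rewrite /ncoord; case: pickle_inv; rewrite /= ?conjC0 ?mulr0.
rewrite -{1}trunc_vec_y ncoord_apply_trunc_vec // mulr_suml; apply: eq_bigr => c _.
by rewrite !mxE entry_v; ring.
Qed.

Definition hs_block (f : nat -> nat -> C) K : R := \sum_(a < K) \sum_(b < K) cnorm2 (f a b).

Lemma hs_block_ge0 f K : 0 <= hs_block f K.
Proof. by do 2!(apply: sumr_ge0 => ? _); exact: cnorm2_ge0. Qed.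

Lemma hs_block_le f K n : (K <= n)%N -> hs_block f K <= hs_block f n.
Proof.
move=> le_Kn; apply: (ler_sum2_ord_widen (F := fun a b => cnorm2 (f a b))) => // a b.
exact: cnorm2_ge0.
Qed.

Lemma hs_block_cvg (f : nat -> nat -> nat -> C) g K :
  (forall a b, cvg_ReIm (fun n => f n a b) (g a b)) ->
  hs_block (f n) K @[n --> \oo] --> hs_block g K.
Proof.
move=> f_cvg; apply: cvg_big => [|a _]; first exact: add_continuous.
apply: cvg_big => [|b _]; first exact: add_continuous.
exact: cvg_ReIm_cnorm2.
Qed.

Lemma hs_sq_ge0 A : (0 <= hs_sq A)%E.
Proof. by apply: esum_ge0 => j _; exact: sqnorm_ge0. Qed.

Lemma hs_sq_entry A : hs_sq A = (\sum_(b <oo) \sum_(a <oo) (cnorm2 (entry A a b))%:E)%E.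
Proof.
rewrite /hs_sq esum_pickle => [|j]; last exact: sqnorm_ge0.
apply: eq_eseriesr => b _; case E: (pickle_inv b) => [j|] /=.
  rewrite sqnorm_ncoord -(pickle_inv_Some E).
  by apply: eq_eseriesr => a _; rewrite entry_pickler.
by rewrite eseries0 // => a _ _; rewrite (entry_Noner _ _ E) cnorm20.
Qed.

Lemma hs_block_le_hs_sq A K : ((hs_block (entry A) K)%:E <= hs_sq A)%E.
Proof.
rewrite hs_sq_entry /hs_block -sumEFin; under eq_bigr do rewrite -sumEFin.
rewrite exchange_big /=.
apply: (@le_trans _ _ (\sum_(b < K) \sum_(a <oo) (cnorm2 (entry A a b))%:E)%E).
  by apply: lee_sum => b _; apply: nneseries_ge_ord => a; exact: cnorm2E_ge0.
by apply: nneseries_ge_ord => b; apply: nneseries_ge0 => a _ _; exact: cnorm2E_ge0.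
Qed.

Lemma hs_sq_le_hs_block A (B : \bar R) :
  (forall K, ((hs_block (entry A) K)%:E <= B)%E) -> (hs_sq A <= B)%E.
Proof.
move=> le_hs_block; rewrite hs_sq_entry; apply: nneseries_ub => [b|K].
  by apply: nneseries_ge0 => a _ _; exact: cnorm2E_ge0.
rewrite -nneseries_sum => [|b a _]; last exact: cnorm2E_ge0.
apply: nneseries_ub => [a|K']; first by apply: sume_ge0 => b _; exact: cnorm2E_ge0.
apply: le_trans (le_hs_block (maxn K K')); under eq_bigr do rewrite sumEFin.
rewrite sumEFin lee_fin.
by apply: (ler_sum2_ord_widen (F := fun a b => cnorm2 (entry A a b)));
  rewrite ?leq_maxl ?leq_maxr // => a b; exact: cnorm2_ge0.
Qed.

Lemma hsmx2_matrix (f : nat -> nat -> C) n :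
  hsmx2 (\matrix_(a < n, b < n) f a b) = ((hs_block f n)%:C)%C.
Proof.
rewrite hsmx2E /hs_block rmorph_sum; apply: eq_bigr => a _.
by rewrite rmorph_sum; apply: eq_bigr => b _; rewrite mxE -cnorm2E.
Qed.

Lemma compression_mul_cvg_ReIm A B a b : bounded_op A -> bounded_op B ->
  cvg_ReIm (fun n => \sum_(c < n) entry A a c * entry B c b) (entry (op_comp A B) a b).
Proof.
move=> bdA bdB; case Eb: (pickle_inv b) => [j|]; last first.
  rewrite (entry_Noner _ _ Eb) (_ : (fun n => _) = fun=> 0); first exact: cvg_ReIm_cst.
  by apply/funext => n; rewrite big1 // => c _; rewrite (entry_Noner _ _ Eb) mulr0.
rewrite -(pickle_inv_Some Eb) entry_pickler.
under eq_fun do under eq_bigr do rewrite entry_pickler.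
under eq_fun do rewrite -ncoord_apply_trunc_vec //.
case Ea: (pickle_inv a) => [i|]; last first.
  under eq_fun do rewrite (ncoord_None _ Ea).
  by rewrite (ncoord_None _ Ea); exact: cvg_ReIm_cst.
rewrite -(pickle_inv_Some Ea) ncoord_pickle; under eq_fun do rewrite ncoord_pickle.
exact/trunc_vec_cvg_ReIm/bounded_op_l2/l2_basis.
Qed.

Lemma commutator_hs_block_le S T X K : positive_op S -> positive_op T -> bounded_op X ->
  ((hs_block (entry (op_sub (op_comp S X) (op_comp X T))) K)%:E
     <= hs_sq X * (hs_sq S + hs_sq T))%E.
Proof.
move=> posS posT bdX; set B := (hs_sq X * _)%E.
have [B_fin|B_infty] := boolP (B \is a fin_num); last first.
  suff -> : B = +oo%E by exact: leey.
  by apply/eqP; rewrite eq_le leey /= leNgt -ge0_fin_numE ?mule_ge0 ?adde_ge0 ?hs_sq_ge0.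
rewrite -(fineK B_fin) lee_fin.
(* W n is the commutator of the n x n compressions *)
pose W n a b :=
  \sum_(c < n) entry S a c * entry X c b - \sum_(c < n) entry X a c * entry T c b.
have W_cvg : hs_block (W n) K @[n --> \oo] -->
    hs_block (entry (op_sub (op_comp S X) (op_comp X T))) K.
  apply: hs_block_cvg => a b; rewrite entry_sub.
  by apply: cvg_ReImB; apply: compression_mul_cvg_ReIm => //; [exact: posS.1 | exact: posT.1].
rewrite -(cvg_lim _ W_cvg) //; apply: limr_le; first exact: cvgP W_cvg.
near=> n; have le_Kn : (K <= n)%N by near: n; exact: nbhs_infty_ge.
apply: le_trans (hs_block_le _ le_Kn) _.
have := hsmx2_commutator_le (compression X n)
  (psdmx_compression posS) (psdmx_compression posT).
have -> : compression S n *m compression X n - compression X n *m compression T n =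
    \matrix_(a < n, b < n) W n a b.
  by apply/matrixP => a b; rewrite !mxE; congr (_ - _); apply: eq_bigr => c _; rewrite !mxE.
rewrite !hsmx2_matrix -rmorphD -rmorphM lecR => /le_trans; apply.
rewrite -lee_fin fineK // EFinM EFinD.
by apply: lee_pmul; rewrite ?lee_fin ?addr_ge0 ?hs_block_ge0 ?leeD ?hs_block_le_hs_sq.
Unshelve. all: by end_near.
Qed.

End SquareSummable.

Theorem mainTheorem9 (R : realType) (I : countType) (S T X : op R I) :
  positive_op S -> positive_op T -> bounded_op X ->
  (hs_norm (op_sub (op_comp S X) (op_comp X T))
     <= hs_norm X * sqrte (hs_norm S ^+ 2 + hs_norm T ^+ 2))%E.
Proof.
move=> posS posT bdX.
have le_hs_sq := hs_sq_le_hs_block (fun K => commutator_hs_block_le K posS posT bdX).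
rewrite /hs_norm !sqr_sqrte ?hs_sq_ge0 // -sqrteM ?hs_sq_ge0 // lee_sqrt //.
by rewrite mule_ge0 ?adde_ge0 ?hs_sq_ge0.
Qed.
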